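(* Consider a UVP instance with finite configuration set $\mathcal{X}\subset\mathbb{R}^d$, maximum per-configuration budget $T$, total budget $B$, and unknown value function $A$ satisfying the monotonicity and smoothness assumptions with parameter $\epsilon>0$. Let $k=\lfloor B/T\rfloor$ denote the number of configurations selected by Enhanced-FullCent, and let $r_k^\star$ be the optimal $k$-center radius of $\mathcal{X}$. Then Enhanced-FullCent (run with parameter $\epsilon$) achieves a $(1-2\epsilon r_k^\star)$-approximation for the UVP problem: its output $\hat{\mathbf{x}}$ satisfies $A(\hat{\mathbf{x}},T)\ge(1-2\epsilon r_k^\star)\max_{\mathbf{x}\in\mathcal{X}}A(\mathbf{x},T)$.
   Context: UVP problem: $A:\mathbb{R}^d\times[T]\to[0,1]$ is unknown ($[T]=\{1,\dots,T\}$); $\mathcal{X}=\{\mathbf{x}_1,\dots,\mathbf{x}_n\}$ is known; the goal is $\max_{b_1,\dots,b_n}\max_i A(\mathbf{x}_i,b_i)$ subject to $\sum_ib_i\le B$. Obtaining $A(\mathbf{x},b)$ requires evaluating $A(\mathbf{x},1),\dots,A(\mathbf{x},b)$ sequentially, costing $b$ units. Assumption 1: $b_1\le b_2\Rightarrow A(\mathbf{x},b_1)\le A(\mathbf{x},b_2)$. Assumption 2: for all $\mathbf{x}_i,\mathbf{x}_j\in\mathcal{X}$, $\min_{b\in[T]}A(\mathbf{x}_i,b)/A(\mathbf{x}_j,b)\ge1-\epsilon\|\mathbf{x}_i-\mathbf{x}_j\|_2$ (ratio $=1$ if both values are $0$, $+\infty$ if only the denominator is $0$). $r_k^\star=\min_{\mathcal{C}\subseteq\mathcal{X},|\mathcal{C}|=k}\max_{\mathbf{x}\in\mathcal{X}}\min_{\mathbf{c}\in\mathcal{C}}\|\mathbf{x}-\mathbf{c}\|_2$.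 For a center $\mathbf{c}$ with evaluated history, $H^{(\mathbf{c})}_{\mathrm{last}}$ is its most recently observed value. Enhanced k-center $\textsc{E-KCenter}(k,\mathcal{C},\mathcal{X},t,\epsilon)$: with $\mathcal{C}^{(0)}=\mathcal{C}$, for $i=1,\dots,k$: for each $\mathbf{x}\in\mathcal{X}\setminus\mathcal{C}^{(i-1)}$ and $\mathbf{c}\in\mathcal{C}^{(i-1)}$ compute $\eta^{(i)}_{\mathbf{c}}=\max_{\mathbf{c}'\in\mathcal{C}^{(i-1)}}H^{(\mathbf{c}')}_{\mathrm{last}}/H^{(\mathbf{c})}_{\mathrm{last}}$ and the enhanced distance $\tilde d^{(i)}(\mathbf{x},\mathbf{c})=\min\{\|\mathbf{x}-\mathbf{c}\|_2,\ \eta^{(i)}_{\mathbf{c}}\|\mathbf{x}-\mathbf{c}\|_2-\frac1\epsilon(\eta^{(i)}_{\mathbf{c}}-1)\}$; let $\Delta^{(i)}(\mathbf{x})=\min_{\mathbf{c}\in\mathcal{C}^{(i-1)}}\tilde d^{(i)}(\mathbf{x},\mathbf{c})$ (a minimum over the empty set is $+\infty$); choose $\mathbf{c}_i\in\arg\max_{\mathbf{x}\in\mathcal{X}\setminus\mathcal{C}^{(i-1)}}\Delta^{(i)}(\mathbf{x})$, evaluate $A(\mathbf{c}_i,1),\dots,A(\mathbf{c}_i,t)$, and set $\mathcal{C}^{(i)}=\mathcal{C}^{(i-1)}\cup\{\mathbf{c}_i\}$. Enhanced-FullCent$(B,T,\mathcal{X},\epsilon)$: with $k=\lfloor B/T\rfloor$,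 run $\textsc{E-KCenter}(k,\emptyset,\mathcal{X},T,\epsilon)$ to obtain centers $\mathcal{C}$ (each evaluated up to budget $T$) and return $\arg\max_{\mathbf{c}\in\mathcal{C}}A(\mathbf{c},T)$. *)

From mathcomp Require Import all_boot all_order all_algebra.
From mathcomp Require Import constructive_ereal.
Set Implicit Arguments. Unset Strict Implicit. Unset Printing Implicit Defensive.
Import Order.TTheory GRing.Theory Num.Theory.
Local Open Scope ring_scope.

Definition dist2 (R : rcfType) (d : nat) (x y : 'rV[R]_d) : R :=
  Num.sqrt (\sum_(i < d) (x 0 i - y 0 i) ^+ 2).

(* Ratio a/b with the paper's convention: 1 if both are 0, +oo if only b is 0. *)
Definition ratioE (R : rcfType) (a b : R) : \bar R :=
  if b == 0 then (if a == 0 then 1%E else +oo%E) else (a / b)%:E.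

Definition monotone_budget (R : rcfType) (d : nat) (A : 'rV[R]_d -> nat -> R) (T : nat) :=
  forall x b1 b2, (1 <= b1)%N -> (b1 <= b2)%N -> (b2 <= T)%N -> A x b1 <= A x b2.

Definition smooth_on (R : rcfType) (d n : nat) (X : 'I_n -> 'rV[R]_d)
    (A : 'rV[R]_d -> nat -> R) (T : nat) (eps : R) :=
  forall i j b, (1 <= b <= T)%N ->
    ((1 - eps * dist2 (X i) (X j))%:E <= ratioE (A (X i) b) (A (X j) b))%E.

Definition cover_radius (R : rcfType) (d n : nat) (X : 'I_n -> 'rV[R]_d)
    (S : {set 'I_n}) : \bar R :=
  \big[Order.max/-oo%E]_(i < n) \big[Order.min/+oo%E]_(c in S) (dist2 (X i) (X c))%:E.

(* Optimal k-center radius r_k^* : minimum over C subset of X with |C| = k.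
   (For k > n no such C exists; we then use |C| = n, giving radius 0.) *)
Definition rstar (R : rcfType) (d n : nat) (X : 'I_n -> 'rV[R]_d) (k : nat) : \bar R :=
  \big[Order.min/+oo%E]_(S : {set 'I_n} | #|S| == minn k n) cover_radius X S.

(* eta_c = max_{c' in C} H_last(c') / H_last(c), where H_last(c) = A(c, t). *)
Definition eta (R : rcfType) (d n : nat) (X : 'I_n -> 'rV[R]_d)
    (A : 'rV[R]_d -> nat -> R) (t : nat) (C : seq 'I_n) (c : 'I_n) : \bar R :=
  \big[Order.max/-oo%E]_(c' <- C) ratioE (A (X c') t) (A (X c) t).

(* Enhanced distance min{dd, eta*dd - (eta-1)/eps}; for eta = +oo we take the
   limit value: -oo if dd < 1/eps, dd otherwise. *)
Definition etilde (R : rcfType) (eps : R) (et : \bar R) (dd : R) : \bar R :=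
  match et with
  | EFin e => (Order.min dd (e * dd - (e - 1) / eps))%:E
  | EPInf => if dd < 1 / eps then -oo%E else dd%:E
  | ENInf => dd%:E
  end.

Definition Delta (R : rcfType) (d n : nat) (X : 'I_n -> 'rV[R]_d)
    (A : 'rV[R]_d -> nat -> R) (t : nat) (eps : R) (C : seq 'I_n) (x : 'I_n)
    : \bar R :=
  \big[Order.min/+oo%E]_(c <- C) etilde eps (eta X A t C c) (dist2 (X x) (X c)).

(* s is a possible run of E-KCenter(k, emptyset, X, t, eps): the centers in
   selection order; each new center lies outside the previously selected ones
   and maximizes Delta among them (ties broken arbitrarily).  The run stops
   after k steps, or earlier if X is exhausted. *)
Definition ekcenter_run (R : rcfType) (d n : nat) (X : 'I_n -> 'rV[R]_d)
    (A : 'rV[R]_d -> nat -> R) (t : nat) (eps : R) (k : nat) (s : seq 'I_n) : Prop :=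
  size s = minn k n /\
  forall p c q, s = p ++ c :: q ->
    c \notin p /\
    forall y, y \notin p -> (Delta X A t eps p y <= Delta X A t eps p c)%E.

(* xo is a possible output of Enhanced-FullCent(B, T, X, eps):
   an argmax of A(., T) over the centers of some run with k = B / T. *)
Definition efullcent_output (R : rcfType) (d n : nat) (X : 'I_n -> 'rV[R]_d)
    (A : 'rV[R]_d -> nat -> R) (B T : nat) (eps : R) (o : 'I_n) : Prop :=
  exists s, ekcenter_run X A T eps (B %/ T) s /\ o \in s /\
    forall c, c \in s -> A (X c) T <= A (X o) T.

(* Suppose some configuration m satisfies M < (1 - 2 eps r) A(m, T), where M is the
   value of the output.  By pigeonhole two of the k + 1 points m, c_1, ..., c_k share
   a center of an optimal k-center solution, so they are within 2r of each other.
   Smoothness rules out that one of them is m: the selected center would then have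
   value at least (1 - 2 eps r) A(m, T) > M.  So two selected centers c_i, c_j with
   i < j are within 2r, and when c_j was chosen its score Delta was at most 2r.
   But m was available at that moment and, again by smoothness (together with the
   bound eta <= M / A(c, T) on the ratios), its score exceeded 2r: this contradicts
   the greedy choice of c_j. *)
From mathcomp Require Import all_boot all_order all_algebra.
From mathcomp Require Import constructive_ereal.
From mathcomp Require Import ring lra.
Set Implicit Arguments. Unset Strict Implicit. Unset Printing Implicit Defensive.
Import Order.TTheory GRing.Theory Num.Theory.
Local Open Scope ring_scope.

Lemma bigmin_le_witness (disp : Order.disp_t) (U : orderType disp) (I : finType)
    (P : pred I) (F : I -> U) (x m : U) :
  (m < x)%O -> (\big[Order.min/x]_(i | P i) F i <= m)%O ->
  exists2 i, P i & (F i <= m)%O.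
Proof.
move=> m_lt_x; case: (boolP [exists i, P i && (F i <= m)%O]).
  by case/existsP=> i /andP[Pi Fi_le]; exists i.
move=> /existsPn none; have : (m < \big[Order.min/x]_(i | P i) F i)%O.
  by apply/bigmin_gtP; split=> // i Pi; move: (none i); rewrite Pi -ltNge.
by move/lt_geF->.
Qed.

Lemma pigeonhole_nth (T : eqType) (U : finType) (f : T -> U) (S : {set U})
    (x0 : T) (s : seq T) :
  (forall x, f x \in S) -> (#|S| < size s)%N ->
  exists i j, (i < j < size s)%N /\ f (nth x0 s i) = f (nth x0 s j).
Proof.
move=> fS S_lt; have : ~~ uniq (map f s).
  apply/negP=> /uniq_leq_size size_le.
  have /size_le : {subset map f s <= enum S} by move=> _ /mapP[x _ ->]; rewrite mem_enum.
  by rewrite size_map -cardE leqNgt S_lt.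
case/(uniqPn (f x0))=> i [j [ij]]; rewrite size_map => j_lt.
by rewrite !(nth_map x0) ?(ltn_trans ij) // => eq_f; exists i, j; rewrite ij.
Qed.

Section EuclideanDistance.
Variables (R : rcfType) (d : nat).
Implicit Types x y z : 'rV[R]_d.

Lemma dist2_ge0 x y : 0 <= dist2 x y.
Proof. exact: sqrtr_ge0. Qed.

Lemma dist2C x y : dist2 x y = dist2 y x.
Proof. by rewrite /dist2; congr Num.sqrt; apply: eq_bigr => i _; rewrite -sqrrN opprB. Qed.

Lemma cauchy_schwarz (a b : 'I_d -> R) :
  (\sum_i a i * b i) ^+ 2 <= (\sum_i a i ^+ 2) * (\sum_i b i ^+ 2).
Proof.
(* Lagrange's identity: the gap is half a sum of squares. *)
have lagrange : \sum_i \sum_j (a i * b j - a j * b i) ^+ 2 =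
    2 * ((\sum_i a i ^+ 2) * (\sum_i b i ^+ 2) - (\sum_i a i * b i) ^+ 2).
  have expand i j : (a i * b j - a j * b i) ^+ 2 =
      a i ^+ 2 * b j ^+ 2 + a j ^+ 2 * b i ^+ 2 - 2 * (a i * b i * (a j * b j)).
    by ring.
  under eq_bigr => i _ do under eq_bigr => j _ do rewrite expand.
  under eq_bigr => i _ do rewrite sumrB big_split /=.
  rewrite sumrB big_split /= -!big_distrlr /=.
  have -> : \sum_i \sum_j a j ^+ 2 * b i ^+ 2 = (\sum_i b i ^+ 2) * (\sum_i a i ^+ 2).
    by rewrite big_distrlr; apply: eq_bigr => i _; apply: eq_bigr => j _; exact: mulrC.
  have -> : \sum_i \sum_j 2 * (a i * b i * (a j * b j)) = 2 * (\sum_i a i * b i) ^+ 2.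
    by rewrite expr2 big_distrlr mulr_sumr; apply: eq_bigr => i _; rewrite mulr_sumr.
  ring.
have : 0 <= \sum_i \sum_j (a i * b j - a j * b i) ^+ 2.
  by apply: sumr_ge0 => i _; apply: sumr_ge0 => j _; exact: sqr_ge0.
rewrite lagrange; lra.
Qed.

Lemma dist2_triangle x y z : dist2 x z <= dist2 x y + dist2 y z.
Proof.
rewrite /dist2.
set a := fun i : 'I_d => x 0 i - y 0 i; set b := fun i : 'I_d => y 0 i - z 0 i.
have -> : \sum_(i < d) (x 0 i - z 0 i) ^+ 2 =
    \sum_i a i ^+ 2 + \sum_i b i ^+ 2 + 2 * \sum_i a i * b i.
  by rewrite mulr_sumr -!big_split /=; apply: eq_bigr => i _; rewrite /a /b; ring.
rewrite -/(\sum_i a i ^+ 2) -/(\sum_i b i ^+ 2).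
set V := \sum_i a i ^+ 2; set W := \sum_i b i ^+ 2; set S := \sum_i a i * b i.
have V_ge0 : 0 <= V by apply: sumr_ge0 => i _; exact: sqr_ge0.
have W_ge0 : 0 <= W by apply: sumr_ge0 => i _; exact: sqr_ge0.
have S_le : S <= Num.sqrt V * Num.sqrt W.
  rewrite -sqrtrM // (le_trans (ler_norm S)) // -sqrtr_sqr.
  exact/ler_wsqrtr/cauchy_schwarz.
have sum_ge0 : 0 <= Num.sqrt V + Num.sqrt W by rewrite addr_ge0 ?sqrtr_ge0.
rewrite -(ger0_norm sum_ge0) -sqrtr_sqr; apply: ler_wsqrtr.
rewrite sqrrD !sqr_sqrtr //; lra.
Qed.

End EuclideanDistance.

Lemma ratioExx (R : rcfType) (b : R) : ratioE b b = 1%E.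
Proof. by rewrite /ratioE; case: ifPn => [->//|b_neq0]; rewrite divff. Qed.

Section EnhancedDistance.
Variables (R : rcfType) (eps : R).
Hypothesis eps_gt0 : 0 < eps.

Lemma etilde_le et dd : (etilde eps et dd <= dd%:E)%E.
Proof.
case: et => [e| |] //=; first by rewrite lee_fin ge_min lexx.
by case: ifP => _; rewrite ?leNye.
Qed.

Lemma etilde_far et dd : (1 <= et)%E -> 1 / eps <= dd -> etilde eps et dd = dd%:E.
Proof.
case: et => [e| |] //= e_ge1 dd_ge; last by rewrite ltNge dd_ge.
rewrite lee_fin in e_ge1; congr EFin; apply/min_idPl.
have : 0 <= (e - 1) * (dd - 1 / eps) by apply: mulr_ge0; lra.
have -> : (e - 1) / eps = (e - 1) * (1 / eps) by rewrite mul1r.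
nra.
Qed.

Lemma etilde_near (rho e dd : R) :
  rho < dd -> eps * rho < 1 - e * (1 - eps * dd) -> (rho%:E < etilde eps e%:E dd)%E.
Proof.
move=> rho_lt_dd rho_lt /=; rewrite lte_fin lt_min rho_lt_dd /=.
have -> : e * dd - (e - 1) / eps = (1 - e * (1 - eps * dd)) / eps.
  by field; rewrite gt_eqF.
by rewrite ltr_pdivlMr // mulrC.
Qed.

End EnhancedDistance.

Section EnhancedKCenter.
Variables (R : rcfType) (d n : nat) (X : 'I_n -> 'rV[R]_d).
Variables (A : 'rV[R]_d -> nat -> R) (T : nat) (eps : R).

Lemma Delta_le_dist2 p u v :
  u \in p -> (Delta X A T eps p v <= (dist2 (X v) (X u))%:E)%E.
Proof. by move=> up; apply: (bigmin_inf_seq _ u) => //; exact: etilde_le. Qed.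

Lemma eta_ge1 p c : c \in p -> (1 <= eta X A T p c)%E.
Proof. by move=> cp; rewrite -(ratioExx (A (X c) T)); exact: (le_bigmax_seq _ c). Qed.

Lemma eta_le p c M :
  0 < A (X c) T -> (forall c', c' \in p -> A (X c') T <= M) ->
  (eta X A T p c <= (M / A (X c) T)%:E)%E.
Proof.
move=> Ac_gt0 le_M; rewrite /eta big_seq; apply: bigmax_le => [|c' c'p].
  exact: leNye.
by rewrite /ratioE gt_eqF // lee_fin ler_pM2r ?invr_gt0 // le_M.
Qed.

Lemma ekcenter_run_greedy k s x0 j y :
  ekcenter_run X A T eps k s -> (j < size s)%N -> y \notin take j s ->
  (Delta X A T eps (take j s) y <= Delta X A T eps (take j s) (nth x0 s j))%E.
Proof.
move=> [_ run] j_lt; apply: (proj2 (run _ _ (drop j.+1 s) _)).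
by rewrite -drop_nth // cat_take_drop.
Qed.

Hypothesis T_gt0 : (0 < T)%N.
Hypothesis eps_gt0 : 0 < eps.
Hypothesis A_ge0 : forall x, 0 <= A x T.
Hypothesis smoothX : smooth_on X A T eps.

Lemma smooth_value_ge (rho : R) c m :
  dist2 (X c) (X m) <= rho -> (1 - eps * rho) * A (X m) T <= A (X c) T.
Proof.
move=> dist_le; have TT : (1 <= T <= T)%N by rewrite T_gt0 leqnn.
have := smoothX c m TT; rewrite /ratioE.
have [-> _|Am_neq0] := eqVneq (A (X m) T) 0; first by rewrite mulr0.
have Am_gt0 : 0 < A (X m) T by rewrite lt_def Am_neq0 A_ge0.
rewrite lee_fin ler_pdivlMr //; apply: le_trans.
by rewrite ler_pM2r // lerD2l lerN2 ler_pM2l.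
Qed.

Lemma etilde_gt p c m (M rho : R) :
  c \in p -> (forall c', c' \in p -> A (X c') T <= M) ->
  M < (1 - eps * rho) * A (X m) T ->
  (rho%:E < etilde eps (eta X A T p c) (dist2 (X m) (X c)))%E.
Proof.
move=> cp le_M M_lt; set D := dist2 (X m) (X c); set a := A (X m) T in M_lt *.
have b_le : A (X c) T <= M by exact: le_M.
have b_ge : (1 - eps * D) * a <= A (X c) T by apply: smooth_value_ge; rewrite dist2C.
have rho_lt : rho < D.
  rewrite ltNge; apply/negP => D_le.
  have : (1 - eps * rho) * a <= A (X c) T by apply: smooth_value_ge; rewrite dist2C.
  lra.
have [D_far|D_near] := leP (1 / eps) D.
  by rewrite etilde_far ?lte_fin ?eta_ge1.
have epsD_lt1 : eps * D < 1 by move: D_near; rewrite ltr_pdivlMr // mulrC.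
have a_gt0 : 0 < a.
  rewrite lt_def A_ge0 andbT; apply/eqP => a0.
  by move: M_lt; rewrite -/a a0 mulr0; have := A_ge0 (X c); lra.
have b_gt0 : 0 < A (X c) T.
  by apply: lt_le_trans b_ge; rewrite mulr_gt0 // subr_gt0.
have := eta_le b_gt0 le_M; have := eta_ge1 cp.
case: (eta X A T p c) => [e| |] //; rewrite !lee_fin => e_ge1 e_le.
apply: etilde_near => //.
have eb_le : e * A (X c) T <= M by rewrite -ler_pdivlMr.
have : e * ((1 - eps * D) * a) <= e * A (X c) T by rewrite ler_wpM2l //; lra.
rewrite mulrA => le_eb.
have : e * (1 - eps * D) * a < (1 - eps * rho) * a by lra.
rewrite ltr_pM2r //; lra.
Qed.

Lemma Delta_gt p m (M rho : R) :
  (forall c, c \in p -> A (X c) T <= M) ->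
  M < (1 - eps * rho) * A (X m) T -> (rho%:E < Delta X A T eps p m)%E.
Proof.
move=> le_M M_lt; rewrite /Delta big_seq.
by apply: lt_bigmin => [|c cp]; [exact: ltry | exact: (etilde_gt cp le_M M_lt)].
Qed.

Lemma greedy_cover_bound k s (S : {set 'I_n}) (f : 'I_n -> 'I_n) (r M : R) :
  ekcenter_run X A T eps k s -> (#|S| <= size s)%N ->
  (forall i, f i \in S) -> (forall i, dist2 (X i) (X (f i)) <= r) ->
  (forall c, c \in s -> A (X c) T <= M) ->
  forall m, (1 - 2 * eps * r) * A (X m) T <= M.
Proof.
move=> run S_le fS f_close le_M m; rewrite leNgt; apply/negP.
rewrite -mulrA mulrCA => M_lt.
have r_ge0 : 0 <= r by apply: le_trans (f_close m); exact: dist2_ge0.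
have m_notin_s : m \notin s.
  apply/negP=> /le_M Am_le; move: M_lt; have := A_ge0 (X m).
  have := mulr_ge0 (ltW eps_gt0) r_ge0; nra.
have [i [j [/andP[ij j_lt] same_center]]] := pigeonhole_nth m fS (S_le : #|S| < size (m :: s))%N.
set u := nth m (m :: s) i; set v := nth m (m :: s) j.
have {}same_center : f u = f v := same_center.
have {same_center}uv_close : dist2 (X v) (X u) <= 2 * r.
  apply: le_trans (dist2_triangle _ (X (f u)) _) _.
  rewrite {1}same_center [dist2 (X (f u)) _]dist2C.
  by have := f_close u; have := f_close v; lra.
case: j ij j_lt @v uv_close => // j ij j_lt v uv_close.
have v_in_s : v \in s by exact: mem_nth.
case: i ij @u uv_close => [|i] ij u uv_close.
  by move: M_lt; rewrite ltNge (le_trans (smooth_value_ge uv_close)) ?le_M.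
rewrite ltnS in ij.
have u_in : u \in take j s by rewrite /u /= -(nth_take m ij) mem_nth // size_takel // ltnW.
have p_le_M c : c \in take j s -> A (X c) T <= M by move/mem_take/le_M.
have := ekcenter_run_greedy m run j_lt (contra (@mem_take _ _ _ _) m_notin_s).
apply/negP; rewrite -ltNge; apply: le_lt_trans (Delta_gt p_le_M M_lt).
by apply: le_trans (Delta_le_dist2 _ u_in) _; rewrite lee_fin.
Qed.

End EnhancedKCenter.

Lemma rstar_attained (R : rcfType) d n (X : 'I_n -> 'rV[R]_d) k r :
  rstar X k = r%:E ->
  exists2 S : {set 'I_n}, #|S| = minn k n & (cover_radius X S <= r%:E)%E.
Proof.
move=> r_opt; have [S /eqP cardS le_r] : exists2 S : {set 'I_n},
    #|S| == minn k n & (cover_radius X S <= r%:E)%E.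
  by apply: (bigmin_le_witness (ltry r)); rewrite -r_opt.
by exists S.
Qed.

Lemma cover_radius_le (R : rcfType) d n (X : 'I_n -> 'rV[R]_d) S r :
  (cover_radius X S <= r%:E)%E -> forall i, exists2 c, c \in S & dist2 (X i) (X c) <= r.
Proof.
move=> /bigmax_leP[_ le_r] i.
by have [c cS] := bigmin_le_witness (ltry r) (le_r i isT); exists c; rewrite // -lee_fin.
Qed.

Theorem theorem6 (R : rcfType) (d n : nat) (X : 'I_n -> 'rV[R]_d)
    (A : 'rV[R]_d -> nat -> R) (B T : nat) (eps r : R) (o : 'I_n) :
  injective X ->
  (0 < T)%N ->
  0 < eps ->
  (forall x b, (1 <= b <= T)%N -> 0 <= A x b <= 1) ->
  monotone_budget A T ->
  smooth_on X A T eps ->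
  rstar X (B %/ T) = r%:E ->
  efullcent_output X A B T eps o ->
  (1 - 2 * eps * r) * \big[Num.max/0]_(j < n) A (X j) T <= A (X o) T.
Proof.
move=> _ T_gt0 eps_gt0 A_bnd _ smoothX r_opt [s [run [_ o_max]]].
have A_ge0 x : 0 <= A x T.
  by have /(_ _)/andP[] // := A_bnd x T; rewrite T_gt0 leqnn.
have [S cardS /cover_radius_le /fin_all_exists2[f fS f_close]] := rstar_attained r_opt.
have S_le : (#|S| <= size s)%N by rewrite cardS (proj1 run).
have bound := greedy_cover_bound T_gt0 eps_gt0 A_ge0 smoothX run S_le fS f_close o_max.
apply: (big_ind (fun z => (1 - 2 * eps * r) * z <= A (X o) T)) => //.
- by rewrite mulr0.
- by move=> x y x_le y_le; rewrite maxEle; case: ifP.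
Qed.
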